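(* For all integers $n,k\ge0$, the number of bilateral Dyck paths of semilength $n$ with $k$ up-steps at odd height equals the number of bilateral Dyck paths of semilength $n$ with $k$ peaks.
   Context: A bilateral Dyck path is a lattice path starting at $(0,0)$ with steps $(1,1)$ (up-steps) and $(1,-1)$ (down-steps) ending on the line $y=0$. The semilength is half the number of steps. An up-step is at height $j$ if it goes from $(i-1,j-1)$ to $(i,j)$; it is at odd height if $j$ is odd. A peak is an up-step immediately followed by a down-step. *)

From mathcomp Require Import all_boot all_algebra.
Set Implicit Arguments. Unset Strict Implicit. Unset Printing Implicit Defensive.
Import GRing.Theory Num.Theory.

(* A lattice path is encoded as a sequence of steps: true = up-step (1,1),
   false = down-step (1,-1). *)

Definition height (p : seq bool) (i : nat) : int :=
  \sum_(j < i) (if nth false p j then 1%:Z else (-1)%R).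

Definition bilateral (p : seq bool) : bool := height p (size p) == 0%R.

(* The step with index i (0-based) goes from x-coordinate i to i+1; if it is an
   up-step its height is the y-coordinate at its end, height p i.+1. *)
Definition odd_up (p : seq bool) (i : nat) : bool :=
  nth false p i && odd `|height p i.+1|%N.

Definition num_odd_up (p : seq bool) : nat :=
  #|[set i : 'I_(size p) | odd_up p i]|.

Definition is_peak (p : seq bool) (i : nat) : bool :=
  nth false p i && (i.+1 < size p) && ~~ nth false p i.+1.

Definition num_peaks (p : seq bool) : nat :=
  #|[set i : 'I_(size p) | is_peak p i]|.

Definition num_paths_odd_up (n k : nat) : nat :=
  #|[set t : (n.*2).-tuple bool | bilateral t && (num_odd_up t == k)]|.

Definition num_paths_peaks (n k : nat) : nat :=
  #|[set t : (n.*2).-tuple bool | bilateral t && (num_peaks t == k)]|.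

From mathcomp Require Import all_boot all_algebra.
From mathcomp Require Import zify ring.
Set Implicit Arguments. Unset Strict Implicit. Unset Printing Implicit Defensive.

(* Both numbers equal C(n, k)^2.  A bilateral path of semilength n is a word
   with n up-steps and n down-steps, and words with u up-steps, d down-steps
   and k peaks (factors "up down") number C(u, k) C(d, k).  On the other side,
   the height after i steps has the parity of i, so the up-steps at odd height
   are exactly the up-steps at even (0-based) positions; a path of length 2n is
   the interleaving of its even and odd subwords, each of length n, and having
   k up-steps at even positions and n - k at odd ones gives C(n, k) C(n, n - k). *)

Fixpoint bool_seqs m : seq (seq bool) :=
  if m is m'.+1 then map (cons true) (bool_seqs m') ++ map (cons false) (bool_seqs m')
  else [:: [::]].

Lemma bool_seqsS m :
  bool_seqs m.+1 = map (cons true) (bool_seqs m) ++ map (cons false) (bool_seqs m).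
Proof. by []. Qed.

Lemma mem_map_cons (c b : bool) s (A : seq (seq bool)) :
  (b :: s \in map (cons c) A) = (b == c) && (s \in A).
Proof.
by apply/mapP/andP => [[x xA [-> ->]] | [/eqP -> sA]]; last exists s.
Qed.

Lemma mem_bool_seqs m s : (s \in bool_seqs m) = (size s == m).
Proof.
elim: m s => [|m IH] s; first by case: s.
rewrite bool_seqsS mem_cat; case: s => [|b s].
  by apply/negbTE/norP; split; apply/mapP => -[].
by rewrite !mem_map_cons IH; case: b; rewrite /= ?orbF.
Qed.

Lemma uniq_bool_seqs m : uniq (bool_seqs m).
Proof.
elim: m => [|m IH] //; rewrite bool_seqsS cat_uniq !map_inj_uniq; try by move=> ? ? [].
apply/and3P; split=> //.
by apply/hasPn => _ /mapP [s _ ->]; rewrite mem_map_cons.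
Qed.

Lemma count_bool_seqsS m (P : pred (seq bool)) : count P (bool_seqs m.+1) =
  count (P \o cons true) (bool_seqs m) + count (P \o cons false) (bool_seqs m).
Proof. by rewrite bool_seqsS count_cat !count_map. Qed.

Lemma card_bool_tuples m (P : pred (seq bool)) :
  #|[set t : m.-tuple bool | P t]| = count P (bool_seqs m).
Proof.
rewrite cardsE cardE /enum_mem size_filter -enumT -(count_map val P).
apply/permP/uniq_perm; first by rewrite map_inj_uniq ?enum_uniq //; exact: val_inj.
  exact: uniq_bool_seqs.
move=> s; rewrite mem_bool_seqs; apply/mapP/eqP => [[t _ ->] | sz_s].
  exact: size_tuple.
by exists (Tuple (introT eqP sz_s)); rewrite ?mem_enum.
Qed.

Lemma card_ord_count n (P : pred nat) : #|[set i : 'I_n | P i]| = count P (iota 0 n).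
Proof. by rewrite cardsE cardE /enum_mem size_filter -enumT -val_enum_ord count_map. Qed.

Lemma count_iotaS n (P : pred nat) :
  count P (iota 0 n.+1) = P 0 + count (P \o succn) (iota 0 n).
Proof. by rewrite /= -[1]addn0 iotaDl count_map. Qed.

Lemma count_addn_eq (T : Type) (A : seq T) (f : T -> nat) (Q : pred T) x k :
  count (fun a => (x + f a == k) && Q a) A =
  if x <= k then count (fun a => (f a == k - x) && Q a) A else 0.
Proof.
case: leqP => [le_xk | lt_kx].
  by apply: eq_count => a; congr andb; apply/eqP/eqP; lia.
by rewrite (@eq_count _ _ pred0) ?count_pred0 // => a /=; case: eqP => //=; lia.
Qed.

Definition bool_words u d := [seq s <- bool_seqs (u + d) | count id s == u].

Lemma count_bool_words u d (P : pred (seq bool)) : 0 < u + d ->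
  count P (bool_words u d) =
    (if u is u'.+1 then count (P \o cons true) (bool_words u' d) else 0)
  + (if d is d'.+1 then count (P \o cons false) (bool_words u d') else 0).
Proof.
case ud_eq: (u + d) => [|m] // _.
rewrite /bool_words ud_eq !count_filter count_bool_seqsS; congr (_ + _).
- case: u ud_eq => [|u] ud_eq; last first.
    rewrite count_filter (_ : m = u + d); last lia.
    by apply: eq_count => s /=; rewrite add1n eqSS.
  by rewrite (@eq_count _ _ pred0) ?count_pred0 // => s /=; rewrite andbF.
- case: d ud_eq => [|d] ud_eq; last first.
    rewrite count_filter (_ : m = u + d); last lia.
    by apply: eq_count => s /=; rewrite add0n.
  rewrite (@eq_in_count _ _ pred0) ?count_pred0 // => s; rewrite mem_bool_seqs => /eqP sz_s /=.
  apply/negbTE/nandP; right; rewrite add0n; apply/eqP => cnt_s.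
  by have := count_size id s; rewrite cnt_s sz_s; lia.
Qed.

Fixpoint peaks_from (c : bool) (s : seq bool) : nat :=
  if s is b :: t then (c && ~~ b) + peaks_from b t else 0.

Lemma num_peaks_cons c s : num_peaks (c :: s) = peaks_from c s.
Proof.
rewrite /num_peaks card_ord_count.
elim: s c => [|b s IH] c; first by rewrite /= /is_peak /= !andbF.
rewrite [size _]/= count_iotaS -[peaks_from c _]/((c && ~~ b) + peaks_from b s) -IH.
by congr (_ + _); rewrite /is_peak /= andbT.
Qed.

Lemma num_peaksE p : num_peaks p = peaks_from false p.
Proof.
rewrite -num_peaks_cons /num_peaks !card_ord_count [size _]/= count_iotaS.
by rewrite /is_peak /= add0n; apply: eq_count => i.
Qed.

(* For [c = true], the [k] blocks of down-steps of [c :: s] compose [d] and its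
   [k] or [k + 1] blocks of up-steps compose [u + 1], whence
   C(d - 1, k - 1) (C(u, k - 1) + C(u, k)). *)
Definition peak_number (c : bool) (u d k : nat) : nat :=
  if ~~ c then 'C(u, k) * 'C(d, k) else
  match k, d with
  | 0, 0 => 1
  | k'.+1, d'.+1 => 'C(u.+1, k) * 'C(d', k')
  | _, _ => 0
  end.

Lemma peak_number_rec c u d k : 0 < u + d ->
  peak_number c u d k =
    (if u is u'.+1 then peak_number true u' d k else 0)
  + (if d is d'.+1 then (if c <= k then peak_number false u d' (k - c) else 0) else 0).
Proof.
case: c; case: u => [|u]; case: d => [|d]; case: k => [|k] //= _.
all: rewrite /peak_number /= ?subn0 ?subn1 ?bin0 ?bin0n ?muln1 ?mul1n ?addn0 ?add0n ?muln0 //.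
- by case: k.
- by rewrite (binS u.+1) mulnDl addnC.
- by rewrite (binS d) mulnDr addnC.
Qed.

Lemma count_peaks_from c u d k :
  count (fun s => peaks_from c s == k) (bool_words u d) = peak_number c u d k.
Proof.
move: {2}(u + d) (erefl (u + d)) => m.
elim: m c u d k => [|m IH] c u d k ud_eq.
  have [-> ->] : u = 0 /\ d = 0 by lia.
  by case: c; case: k.
rewrite count_bool_words ?peak_number_rec ?ud_eq //; congr (_ + _).
  case: u ud_eq => // u ud_eq; rewrite -IH; last lia.
  by apply: eq_count => s /=; rewrite andbF.
case: d ud_eq => // d ud_eq.
rewrite (@eq_count _ _ (fun s => (c + peaks_from false s == k) && predT s)); last first.
  by move=> s /=; rewrite !andbT.
rewrite count_addn_eq; case: ifP => // _; rewrite -IH; last lia.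
by apply: eq_count => s; rewrite andbT.
Qed.

Lemma height_S p i :
  height p i.+1 = (height p i + if nth false p i then 1 else -1)%R.
Proof. by rewrite /height big_ord_recr. Qed.

Lemma height_cons b s i :
  height (b :: s) i.+1 = ((if b then 1 else -1) + height s i)%R.
Proof.
by rewrite /height big_ord_recl; congr (_ + _)%R; apply: eq_bigr => j _; rewrite lift0.
Qed.

Lemma odd_height p i : odd `|height p i|%N = odd i.
Proof.
elim: i => [|i IH]; first by rewrite /height big_ord0.
by rewrite height_S /=; case: (nth false p i); lia.
Qed.

Lemma bilateralE p : bilateral p = ((count id p).*2 == size p).
Proof.
rewrite /bilateral; suff -> : height p (size p) = ((count id p).*2%:Z - (size p)%:Z)%R by lia.
elim: p => [|b p IH]; first by rewrite /height big_ord0.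
by rewrite height_cons IH /=; case: b; lia.
Qed.

(* [parity_ups true s] and [parity_ups false s] count the up-steps of [s] at
   even and at odd (0-based) positions. *)
Fixpoint parity_ups (e : bool) (s : seq bool) : nat :=
  if s is b :: t then (e && b) + parity_ups (~~ e) t else 0.

Lemma num_odd_upE p : num_odd_up p = parity_ups true p.
Proof.
rewrite /num_odd_up card_ord_count.
rewrite (@eq_count _ _ (fun i => nth false p i && (odd i == ~~ true))); last first.
  by move=> i; rewrite /odd_up odd_height /=; case: odd.
elim: p true => [|b p IH] e //.
rewrite [size _]/= count_iotaS -[parity_ups e _]/((e && b) + parity_ups (~~ e) p) -IH.
by congr (_ + _); [case: e; case: b | apply: eq_count => i /=; case: odd; case: e].
Qed.

Lemma count_parity_ups e s : count id s = parity_ups e s + parity_ups (~~ e) s.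
Proof.
by elim: s e => [|b s IH] e //=; rewrite (IH (~~ e)) negbK; case: b; case: e => /=; lia.
Qed.

Lemma parity_ups_cons2 e x y s :
  parity_ups e [:: x, y & s] = (if e then x else y) + parity_ups e s.
Proof. by case: e; case: x; case: y => /=; lia. Qed.

Lemma count_parity_ups_eq m a b :
  count (fun s => (parity_ups true s == a) && (parity_ups false s == b)) (bool_seqs m.*2) =
  'C(m, a) * 'C(m, b).
Proof.
elim: m a b => [|m IH] a b; first by case: a; case: b.
have shift x y :
    count (fun s => (parity_ups true [:: x, y & s] == a) &&
                    (parity_ups false [:: x, y & s] == b)) (bool_seqs m.*2) =
    if (x <= a) && (y <= b) then 'C(m, a - x) * 'C(m, b - y) else 0.
  rewrite (eq_count (a2 := fun s => (x + parity_ups true s == a) &&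
                                    (y + parity_ups false s == b))); last first.
    by move=> s; rewrite !parity_ups_cons2.
  rewrite count_addn_eq; case: (x <= a) => //=.
  rewrite (eq_count (a2 := fun s => (y + parity_ups false s == b) &&
                                    (parity_ups true s == a - x))); last first.
    by move=> s; rewrite andbC.
  rewrite count_addn_eq; case: (y <= b) => //=; rewrite -IH.
  by apply: eq_count => s; rewrite andbC.
rewrite doubleS !count_bool_seqsS !shift {shift}.
by case: a => [|a]; case: b => [|b]; rewrite /= ?subn0 ?subn1 /= ?bin0 ?binS; ring.
Qed.

Lemma num_paths_peaks_binomial n k : num_paths_peaks n k = 'C(n, k) ^ 2.
Proof.
rewrite /num_paths_peaks.
rewrite (card_bool_tuples _ (fun s => bilateral s && (num_peaks s == k))) -addnn.
rewrite (@eq_in_count _ _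
           (predI (fun s => peaks_from false s == k) (fun s => count id s == n))).
  by rewrite -count_filter count_peaks_from.
by move=> s; rewrite mem_bool_seqs bilateralE num_peaksE => /eqP sz_s /=; rewrite sz_s; lia.
Qed.

Lemma num_paths_odd_up_binomial n k : num_paths_odd_up n k = 'C(n, k) ^ 2.
Proof.
rewrite /num_paths_odd_up.
rewrite (card_bool_tuples _ (fun s => bilateral s && (num_odd_up s == k))).
have [le_kn | lt_nk] := leqP k n.
  rewrite expnS expn1 -{2}(bin_sub le_kn) -count_parity_ups_eq.
  apply: eq_in_count => s.
  by rewrite mem_bool_seqs bilateralE num_odd_upE (count_parity_ups true) /= => /eqP ->; lia.
rewrite bin_small // (@eq_in_count _ _ pred0) ?count_pred0 // => s.
by rewrite mem_bool_seqs bilateralE num_odd_upE (count_parity_ups true) /= => /eqP ->; lia.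
Qed.

Theorem corollary2 (n k : nat) : num_paths_odd_up n k = num_paths_peaks n k.
Proof. by rewrite num_paths_odd_up_binomial num_paths_peaks_binomial. Qed.
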